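(* Let $(\mathbb S,+,\cdot)$ be an S-Field, let $s,t\in\mathbb S$ and $m\in\mathbb S_0$ with $m\neq 0$. Then $\frac{s}{m}+\frac{t}{m}=\frac{s+t}{m}$.
   Context: An S-Structure is a triple $(\mathbb S,+,\cdot)$ where $\mathbb S$ is a set and $+,\cdot$ are binary operations on $\mathbb S$ such that: $(\mathbb S,+)$ is a commutative group with identity $0$ (the inverse of $s$ is written $-s$, and $s-t:=s+(-t)$); $\mathbb S$ is closed under $\cdot$; and there exists $s\in\mathbb S$ with $0\cdot s\neq 0$ or $s\cdot 0\neq 0$. Multiplication binds tighter than addition. The structures considered come with a distinguished element of $\mathbb S$ denoted $1$. It is Commutative if $s\cdot t=t\cdot s$ for all $s,t$. For a Commutative S-Structure and $\alpha\in\mathbb S$, put $\mathbb S_\alpha=\{s\in\mathbb S:0\cdot s=s\cdot 0=\alpha\}$ and $\Lambda=\{\alpha\in\mathbb S:\mathbb S_\alpha\neq\emptyset\}$. Wheel Distributive: $s\cdot(t+r)+(s\cdot 0)=(s\cdot t)+(s\cdot r)$ for all $s,t,r\in\mathbb S$. S-Associative: for all $m,n\in\mathbb S_0$ and $s\in\mathbb S$, $m\cdot(n\cdot s)=(m\cdot n)\cdot s-([(m-1)\cdot(n-1)]\cdot(0\cdot s))$. Base: if $\mathbb S_0\neq\emptyset$ and $\alpha\in\Lambda$, $q\in\mathbb S_\alpha$ is a Base for $\mathbb S_\alpha$ if $q+\beta\in\mathbb S_\alpha$ for all $\beta\in\mathbb S_0$ and every $s\in\mathbb S_\alpha$ equals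 $q+\beta$ for some $\beta\in\mathbb S_0$. Coordinated: $\mathbb S_0\neq\emptyset$ and every $\mathbb S_\alpha$ with $\alpha\in\Lambda$ has a Base. Standard Bases: a Coordinated Commutative S-Structure has Standard Bases if there is a specified element $q_0(1)\in\mathbb S_1$ which is a Base for $\mathbb S_1$, and for every $\alpha\in\Lambda$ the element $q_0(\alpha):=\alpha\cdot(q_0(1)+1)-1$ lies in $\mathbb S_\alpha$ and is a Base for $\mathbb S_\alpha$. An Essential S-Structure is an S-Structure that is Commutative, Wheel Distributive, S-Associative, has Standard Bases (in particular is Coordinated), satisfies $0,1\in\mathbb S_0$, and satisfies $\mathbb S_0=\{1\cdot x:x\in\mathbb S_0\}$. A Unity is an element $e\in\Lambda$ with $e\cdot s=s\cdot e=s$ for all $s\in\mathbb S$. Scalar Inverses: the structure has a Unity $e$ and for every $x\in\mathbb S_0$ with $x\neq 0$ there is $x^{-1}\in\mathbb S_0$ with $x\cdot x^{-1}=x^{-1}\cdot x=e$. An S-Ring is an Essential S-Structure with a Unity; an S-Field is an S-Ring with Scalar Inverses. Division By Scalars: for $s\in\mathbb S$ and $m\in\mathbb S_0$, $\frac{s}{m}$ denotes an element $q\in\mathbb S$ such that $s=m\cdot q=q\cdot m$. *)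

Record SOps := {
  car :> Type;
  sadd : car -> car -> car;
  sopp : car -> car;
  szero : car;
  smul : car -> car -> car;
  sone : car
}.

Section Defs.
Variable S : SOps.
Local Notation "x + y" := (sadd S x y).
Local Notation "- x" := (sopp S x).
Local Notation "x - y" := (sadd S x (sopp S y)).
Local Notation "x * y" := (smul S x y).
Local Notation "0" := (szero S).
Local Notation "1" := (sone S).

(* (S,+) commutative group with identity 0; closure under * is by typing;
   and some s with 0*s <> 0 or s*0 <> 0. *)
Definition IsSStructure : Prop :=
  (forall a b c : S, a + (b + c) = (a + b) + c) /\
  (forall a b : S, a + b = b + a) /\
  (forall a : S, a + 0 = a) /\
  (forall a : S, a + (- a) = 0) /\
  (exists s : S, 0 * s <> 0 \/ s * 0 <> 0).

Definition Commutative : Prop := forall s t : S, s * t = t * s.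

Definition InS (alpha s : S) : Prop := 0 * s = alpha /\ s * 0 = alpha.

Definition InLambda (alpha : S) : Prop := exists s : S, InS alpha s.

Definition WheelDistributive : Prop :=
  forall s t r : S, s * (t + r) + (s * 0) = (s * t) + (s * r).

Definition SAssociative : Prop :=
  forall m n s : S, InS 0 m -> InS 0 n ->
    m * (n * s) = (m * n) * s - (((m - 1) * (n - 1)) * (0 * s)).

Definition IsBase (alpha q : S) : Prop :=
  InS alpha q /\
  (forall beta : S, InS 0 beta -> InS alpha (q + beta)) /\
  (forall s : S, InS alpha s -> exists beta : S, InS 0 beta /\ s = q + beta).

Definition Coordinated : Prop :=
  (exists x : S, InS 0 x) /\
  (forall alpha : S, InLambda alpha -> exists q : S, IsBase alpha q).

Definition q0 (q01 alpha : S) : S := alpha * (q01 + 1) - 1.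

Definition HasStandardBases : Prop :=
  Coordinated /\
  exists q01 : S, IsBase 1 q01 /\
    forall alpha : S, InLambda alpha -> IsBase alpha (q0 q01 alpha).

Definition Essential : Prop :=
  IsSStructure /\ Commutative /\ WheelDistributive /\ SAssociative /\
  HasStandardBases /\ InS 0 0 /\ InS 0 1 /\
  (forall y : S, InS 0 y <-> exists x : S, InS 0 x /\ y = 1 * x).

Definition IsUnity (e : S) : Prop :=
  InLambda e /\ forall s : S, e * s = s /\ s * e = s.

Definition IsSRing : Prop := Essential /\ exists e : S, IsUnity e.

Definition IsSField : Prop :=
  Essential /\
  exists e : S, IsUnity e /\
    forall x : S, InS 0 x -> x <> 0 ->
      exists y : S, InS 0 y /\ x * y = e /\ y * x = e.

(* q is a value of s/m (Division By Scalars) *)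
Definition IsQuot (s m q : S) : Prop := s = m * q /\ s = q * m.

End Defs.

From Corelib Require Import ssreflect.

(* Only the S-Structure's wheel distributivity and commutativity matter: for a
   scalar [m] we have [m * 0 = 0], so the correction term [m * 0] of wheel
   distributivity vanishes and [m * (q1 + q2) = m * q1 + m * q2]. *)

Section ScalarDivision.

Variable S : SOps.
Local Notation "x + y" := (sadd S x y).
Local Notation "x * y" := (smul S x y).
Local Notation "0" := (szero S).

Hypothesis addr0 : forall a : S, a + 0 = a.
Hypothesis mulC : Commutative S.
Hypothesis mulDr_wheel : WheelDistributive S.

Lemma mulDr_of_mulr0 (m t r : S) : m * 0 = 0 -> m * (t + r) = m * t + m * r.
Proof. by move=> m0; rewrite -mulDr_wheel m0 addr0. Qed.

Lemma IsQuot_add (s t m q1 q2 : S) :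
  m * 0 = 0 -> IsQuot S s m q1 -> IsQuot S t m q2 ->
  IsQuot S (s + t) m (q1 + q2).
Proof.
move=> m0 [-> _] [-> _].
have mq : m * q1 + m * q2 = m * (q1 + q2) by rewrite mulDr_of_mulr0.
by split; rewrite mq // mulC.
Qed.

End ScalarDivision.

Theorem proposition4p1p4 (S : SOps) (HS : IsSField S) (s t m : S)
  (Hm : InS S (szero S) m) (Hm0 : m <> szero S) (q1 q2 : S)
  (H1 : IsQuot S s m q1) (H2 : IsQuot S t m q2) :
  IsQuot S (sadd S s t) m (sadd S q1 q2).
Proof.
have [[[_ [_ [addr0 _]]] [mulC [mulDr_wheel _]]] _] := HS.
by apply: IsQuot_add => //; case: Hm.
Qed.
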